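(* Let $G$ be a profinite group and $X$ a scattered profinite $G$-space of finite Cantor–Bendixson rank $n$, such that each $x\in X$ has a neighbourhood basis $\mathcal{B}_x$ consisting of $\mathrm{stab}_G(x)$-invariant open sets. Let $0\to\mathrm{const}\,\mathbb{Q}\xrightarrow{\delta_0}I^0\xrightarrow{\delta_1}I^1\xrightarrow{\delta_2}\cdots$ be the equivariant Godement resolution of the constant sheaf $\mathrm{const}\,\mathbb{Q}$ (with $I^{-1}=\mathrm{const}\,\mathbb{Q}$). Then for every $x\in X$, every $U\in\mathcal{B}_x$ and every $i<\mathrm{ht}(x)$, the cokernel of $\delta_i(U)\colon I^{i-1}(U)\to I^i(U)$ contains a nonzero element represented by a $\mathrm{stab}_G(x)$-invariant section of $I^i$ over $U$.
   Context: A profinite $G$-space is a compact Hausdorff totally disconnected space with continuous $G$-action. $G$-equivariant sheaves of $\mathbb{Q}$-modules over $X$: sheaf spaces of $\mathbb{Q}$-modules $p\colon E\to X$ with continuous $G$-action making $p$ equivariant and stalk maps linear. $\mathrm{const}\,\mathbb{Q}$ is the constant sheaf with stalk $\mathbb{Q}$ and trivial action. For a $G$-sheaf $F$, $I^0(F)=\prod_A i_{A*}(F|_A)$ (product over $G$-orbits $A$, $i_{A*}$ extension by zero), $\delta_F\colon F\to I^0(F)$ the canonical monomorphism; the equivariant Godement resolution of $E$ has $C^0=E$, $I^k=I^0(C^k)$, $C^{k+1}=\mathrm{coker}(\delta_{C^k})$, and differentials the composites $I^{k}\to C^{k+1}\to I^{k+1}$. Cantor–Bendixson process, rank, scattered: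 as usual ($X^{(\alpha+1)}$ removes isolated points of $X^{(\alpha)}$, intersections at limits); $\mathrm{ht}(x)=\kappa$ with $x\in X^{(\kappa)}\setminus X^{(\kappa+1)}$. $F(U)$ denotes sections over $U$. *)

From HB Require Import structures.
From mathcomp Require Import all_boot all_order all_algebra.
From mathcomp Require Import all_classical all_reals topology.
From mathcomp Require Import rat.
Set Implicit Arguments. Unset Strict Implicit. Unset Printing Implicit Defensive.
Import Order.TTheory GRing.Theory Num.Theory.
Local Open Scope classical_set_scope.
Local Open Scope ring_scope.

Definition is_profinite_space (T : topologicalType) : Prop :=
  [/\ compact [set: T], hausdorff_space T & totally_disconnected [set: T]].

Definition is_profinite_group (G : topologicalType)
  (mul : G -> G -> G) (inv : G -> G) (one : G) : Prop :=
  [/\ [/\ (forall a b c, mul a (mul b c) = mul (mul a b) c),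
          (forall a, mul one a = a /\ mul a one = a) &
          (forall a, mul (inv a) a = one /\ mul a (inv a) = one)],
      continuous (fun p : G * G => mul p.1 p.2),
      continuous inv & is_profinite_space G].

Definition is_profinite_Gspace (G X : topologicalType)
  (mul : G -> G -> G) (one : G) (act : G -> X -> X) : Prop :=
  [/\ (forall x, act one x = x),
      (forall g h x, act (mul g h) x = act g (act h x)),
      continuous (fun p : G * X => act p.1 p.2) & is_profinite_space X].

Section CB.
Variable X : topologicalType.

Definition isolated_in (A : set X) (x : X) : Prop :=
  A x /\ exists U, open U /\ U `&` A = [set x].

Definition cb_deriv (A : set X) : set X := [set x | A x /\ ~ isolated_in A x].

Definition cbX (k : nat) : set X := iter k cb_deriv [set: X].

Definition scattered : Prop :=
  forall A : set X, A !=set0 -> exists x, isolated_in A x.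

Definition cb_rank (n : nat) : Prop :=
  cbX n = set0 /\ forall m, cbX m = set0 -> (n <= m)%N.

Definition height (x : X) (k : nat) : Prop := cbX k x /\ ~ cbX k.+1 x.

End CB.

Section Sheaves.
Variables (G X : topologicalType) (inv : G -> G) (act : G -> X -> X).

(* A sheaf space over X: the underlying space is the subspace [pts] of the
   carrier [car]; [sopen] are its open sets (subsets of [pts]); fibrewise
   Q-module operations and the G-action are given as functions. *)
Record shsp := ShSp {
  car : Type;
  pts : set car;
  sopen : set car -> Prop;
  proj : car -> X;
  szero : X -> car;
  sadd : car -> car -> car;
  sopp : car -> car;
  sscale : rat -> car -> car;
  sact : G -> car -> car }.
Arguments pts : clear implicits.
Arguments sopen : clear implicits.
Arguments proj : clear implicits.
Arguments szero : clear implicits.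
Arguments sadd : clear implicits.
Arguments sopp : clear implicits.
Arguments sscale : clear implicits.
Arguments sact : clear implicits.

(* continuous sections of F over an (arbitrary) subset W of X (subspace topology) *)
Definition Gamma (F : shsp) (W : set X) (s : X -> car F) : Prop :=
  (forall y, W y -> pts F (s y) /\ proj F (s y) = y) /\
  (forall y, W y -> forall O, sopen F O -> O (s y) ->
     exists V, open V /\ V y /\ forall z, W z -> V z -> O (s z)).
Arguments Gamma : clear implicits.

Definition orbit (A : set X) : Prop := exists x, A = range (fun g => act g x).

(* The constant sheaf const Q: sheaf space X x Q (Q discrete), trivial action on Q *)
Definition constQ : shsp :=
  @ShSp (X * rat)%type [set: X * rat]
    (fun O => forall e, O e -> exists V, open V /\ V e.1 /\ forall y, V y -> O (y, e.2))
    fst (fun x => (x, 0)) (fun e f => (e.1, e.2 + f.2)) (fun e => (e.1, - e.2))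
    (fun q e => (e.1, q * e.2)) (fun g e => (act g e.1, e.2)).

Section Godement.
Variable F : shsp.

(* families indexed by orbits A of sections of F over U /\ A :
   elements of prod_A (i_{A*}(F|_A))(U) *)
Definition S := set X -> X -> car F.

Definition secI (U : set X) (sg : S) : Prop :=
  open U /\ forall A, orbit A -> Gamma F (U `&` A) (sg A).

(* germ equivalence at x for the product presheaf *)
Definition eqI (x : X) (r r' : set X * S) : Prop :=
  exists W, [/\ open W, W x, W `<=` r.1 `&` r'.1 &
    forall A, orbit A -> forall y, W y -> A y -> r.2 A y = r'.2 A y].

(* germ equivalence at x for the presheaf cokernel of delta_F : F -> I^0 F :
   r - r' is locally (near x) the image of a section t of F *)
Definition eqC (x : X) (r r' : set X * S) : Prop :=
  exists W t, [/\ open W, W x, W `<=` r.1 `&` r'.1, Gamma F W t &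
    forall A, orbit A -> forall y, W y -> A y -> r.2 A y = sadd F (r'.2 A y) (t y)].

Definition gcar := (X * set (set X * S))%type.

Section Germ.
Variable eqv : X -> set X * S -> set X * S -> Prop.

Definition germ (x : X) (r : set X * S) : gcar :=
  (x, [set r' | secI r'.1 r'.2 /\ eqv x r' r]).

Definition gzero (x : X) : gcar := germ x ([set: X], fun _ y => szero F y).
Definition gadd (e1 e2 : gcar) : gcar :=
  (e1.1, [set r | secI r.1 r.2 /\ exists r1 r2, [/\ e1.2 r1, e2.2 r2 &
     eqv e1.1 r (r1.1 `&` r2.1, fun A y => sadd F (r1.2 A y) (r2.2 A y))]]).
Definition gopp (e : gcar) : gcar :=
  (e.1, [set r | secI r.1 r.2 /\ exists r1, e.2 r1 /\
     eqv e.1 r (r1.1, fun A y => sopp F (r1.2 A y))]).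
Definition gscale (q : rat) (e : gcar) : gcar :=
  (e.1, [set r | secI r.1 r.2 /\ exists r1, e.2 r1 /\
     eqv e.1 r (r1.1, fun A y => sscale F q (r1.2 A y))]).
(* (g.sigma)_A (y) = g.(sigma_A (g^-1 y)) on gU  (orbits are G-stable) *)
Definition gact (g : G) (e : gcar) : gcar :=
  (act g e.1, [set r | secI r.1 r.2 /\ exists r1, e.2 r1 /\
     eqv (act g e.1) r (act g @` r1.1, fun A y => sact F g (r1.2 A (act (inv g) y)))]).
End Germ.

(* naive product: etale space of the presheaf U |-> prod_A Gamma(U /\ A, F) *)
Definition isgermI (e : gcar) : Prop :=
  exists U sg, [/\ secI U sg, U e.1 & e = germ eqI e.1 (U, sg)].

Definition NO (O : set gcar) : Prop :=
  O `<=` isgermI /\ forall e, O e -> exists U sg, [/\ secI U sg, U e.1,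
     e = germ eqI e.1 (U, sg) & forall y, U y -> O (germ eqI y (U, sg))].

(* the product in the category of G-sheaves: the union of all open G-stable
   subspaces of the naive product on which the action G x O -> O is continuous *)
Definition Gcont (O : set gcar) : Prop :=
  (forall g e, O e -> O (gact eqI g e)) /\
  forall g e, O e -> forall N, NO N -> N (gact eqI g e) ->
    exists V M, [/\ open V, V g, NO M, M e &
      forall g' e', V g' -> M e' -> O e' -> N (gact eqI g' e')].

Definition Eprod : set gcar := [set e | exists O, [/\ NO O, Gcont O & O e]].

(* I^0(F) = prod_A i_{A*}(F|_A) *)
Definition I0 : shsp :=
  @ShSp gcar Eprod (fun O => exists O', NO O' /\ O = O' `&` Eprod) fst
    (gzero eqI) (gadd eqI) (gopp eqI) (gscale eqI) (gact eqI).

(* quotient map I^0(F) -> coker(delta_F), stalkwise *)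
Definition qmap (e : gcar) : gcar :=
  (e.1, [set r | secI r.1 r.2 /\ exists r0, e.2 r0 /\ eqC e.1 r r0]).

(* coker(delta_F) as a sheaf space: stalkwise quotient, quotient topology *)
Definition Coker : shsp :=
  @ShSp gcar (qmap @` Eprod)
    (fun O => O `<=` qmap @` Eprod /\ sopen I0 [set e | Eprod e /\ O (qmap e)]) fst
    (gzero eqC) (gadd eqC) (gopp eqC) (gscale eqC) (gact eqC).

End Godement.

Fixpoint Cs (k : nat) : shsp := match k with 0 => constQ | k.+1 => Coker (Cs k) end.
Definition Is (k : nat) : shsp := I0 (Cs k).

(* I^{i-1}, with I^{-1} = const Q *)
Definition Iprev (i : nat) : shsp := match i with 0 => constQ | k.+1 => Is k end.

(* delta_i(U) : I^{i-1}(U) -> I^i(U) on sections;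
   delta_0 = delta_{const Q}, delta_{k+1} = (I^k -> C^{k+1} -> I^{k+1}) *)
Definition delta (i : nat) : set X -> (X -> car (Iprev i)) -> X -> car (Is i) :=
  match i as i0 return set X -> (X -> car (Iprev i0)) -> X -> car (Is i0) with
  | 0 => fun U t y => germ (@eqI constQ) y (U, fun _ => t)
  | k.+1 => fun U s y =>
      germ (@eqI (Cs k.+1)) y (U, fun _ z => @qmap (Cs k) (s z))
  end.

End Sheaves.

Arguments Gamma {G X} F W s.
Arguments pts {G X} s _.
Arguments sopen {G X} s _.
Arguments proj {G X} s _.
Arguments szero {G X} s _.
Arguments sadd {G X} s _ _.
Arguments sopp {G X} s _.
Arguments sscale {G X} s _ _.
Arguments sact {G X} s _ _.
Arguments delta {G X} inv act i.

From Pilot Require Import Defs.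
From mathcomp Require Import all_boot all_order all_algebra.
From mathcomp Require Import all_classical all_reals topology.

Set Implicit Arguments. Unset Strict Implicit. Unset Printing Implicit Defensive.
Local Open Scope classical_set_scope.

(* Let C^0 = const Q, C^(k+1) = coker(delta_(C^k)), I^k = I^0(C^k), and let
   q : I^k -> C^(k+1) be the quotient map.  By recursion we build global
   G-invariant sections c_k of C^k: c_0 = 1 and c_(k+1) = q(R_k), where R_k is
   the global section of I^k whose component on every orbit is the cut
   phi_k = "c_k on the points of height exactly k, and 0 elsewhere".  The
   section of the theorem is R_i restricted to U.  Everything rests on a
   density fact: a point u of X^(k+1) is a limit of points of height k while
   the zero locus of a section is open, so phi_k agrees with no continuous
   section of C^k near u, provided c_k does not vanish on X^(k); this
   non-vanishing is in turn proved by induction from the same fact.  If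
   delta_i(t) = R_i near x with ht(x) > i, then t is zero modulo delta near x
   (where phi_i vanishes) and equals phi_i modulo delta near points of height
   i close to x; subtracting yields such a forbidden section. *)

Lemma open_of_nbhd (T : topologicalType) (A : set T) :
  (forall y, A y -> exists V, [/\ open V, V y & V `<=` A]) -> open A.
Proof.
move=> H; rewrite openE => y /H [V [oV Vy VA]].
by apply: (@filterS _ _ _ V) => //; apply: open_nbhs_nbhs.
Qed.

Lemma nbhs_open (T : topologicalType) (A : set T) y :
  nbhs y A -> exists V, [/\ open V, V y & V `<=` A].
Proof. by rewrite nbhsE => -[V [oV Vy] VA]; exists V. Qed.

Section Resolution.
Variables (G X : topologicalType) (mul : G -> G -> G) (inv : G -> G) (one : G)
  (act : G -> X -> X).
Hypothesis act1 : forall x, act one x = x.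
Hypothesis actM : forall g h x, act (mul g h) x = act g (act h x).
Hypothesis mulVg : forall g, mul (inv g) g = one.
Hypothesis mulgV : forall g, mul g (inv g) = one.
Hypothesis act_cont : continuous (fun p : G * X => act p.1 p.2).
Hypothesis scat : scattered X.

Lemma actK g x : act (inv g) (act g x) = x.
Proof. by rewrite -actM mulVg act1. Qed.

Lemma actKV g x : act g (act (inv g) x) = x.
Proof. by rewrite -actM mulgV act1. Qed.

Lemma act_nbhd (W : set X) g y : open W -> W (act g y) ->
  exists V V', [/\ open V, V g, open V', V' y &
    forall g' y', V g' -> V' y' -> W (act g' y')].
Proof.
move=> oW Wg.
have : nbhs (g, y) ((fun p : G * X => act p.1 p.2) @^-1` W).
  by apply: act_cont; apply: open_nbhs_nbhs.
case=> -[A B] /= [nA nB] AB.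
have [V [oV Vg VA]] := nbhs_open nA.
have [V' [oV' Vy VB]] := nbhs_open nB.
exists V, V'; split=> // g' y' Vg' Vy'.
by apply: (AB (g', y')); split; [apply: VA | apply: VB].
Qed.

(* Each g acts by a homeomorphism, so translates of open sets are open. *)
Lemma open_img g (W : set X) : open W -> open (act g @` W).
Proof.
have -> : act g @` W = act (inv g) @^-1` W.
  apply/seteqP; split=> z; first by case=> w Ww <-; rewrite /= actK.
  by move=> Wz; exists (act (inv g) z) => //; rewrite actKV.
move=> oW; apply: open_of_nbhd => y Wy.
have [V [V' [oV Vg oV' Vy H]]] := act_nbhd oW Wy.
by exists V'; split=> // z Vz; apply: H.
Qed.

Lemma orbit_act A g z : Defs.orbit act A -> A z -> A (act g z).
Proof. by case=> x -> [h _ <-]; exists (mul g h) => //; rewrite actM. Qed.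

Lemma orbit_actV A g z : Defs.orbit act A -> A (act g z) -> A z.
Proof. by move=> oA Az; rewrite -(actK g z); apply: orbit_act. Qed.

Lemma orbit_of z :
  Defs.orbit act (range (fun g => act g z)) /\ range (fun g => act g z) z.
Proof. by split; [exists z | exists one]. Qed.

(* In a scattered G-space every orbit is discrete: some point of the orbit
   is isolated in it, and translating its isolating neighbourhood isolates
   every other point. *)
Lemma orbit_discrete A y : Defs.orbit act A -> A y ->
  exists V, [/\ open V, V y & forall z, V z -> A z -> z = y].
Proof.
move=> oA Ay.
have [a [Aa [V0 [oV0 V0A]]]] := scat (ex_intro _ y Ay).
have [g ag] : exists g, act g a = y.
  case: oA Ay Aa => x -> [g' _ <-] [h _ <-].
  by exists (mul g' (inv h)); rewrite actM actK.
exists (act g @` V0); split; first exact: open_img.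
  by exists a => //; have [] : (V0 `&` A) a by rewrite V0A.
move=> z [w V0w <-] Az.
have : (V0 `&` A) w by split=> //; apply: orbit_actV Az.
by rewrite V0A => ->.
Qed.

Definition in_stalk (F : shsp G X) (v : car F) (y : X) :=
  pts F v /\ Defs.proj F v = y.

(* The laws of an equivariant sheaf of abelian groups that the argument
   uses: stalkwise group and action laws, closure of continuous sections
   under the operations, openness of zero loci, and transport of sections
   along the action.  They hold for const Q and pass to cokernels. *)
Record SheafLaws (F : shsp G X) : Prop := {
  sl_zero : forall y, in_stalk (szero F y) y;
  sl_add : forall v w y, in_stalk v y -> in_stalk w y -> in_stalk (sadd F v w) y;
  sl_opp : forall v y, in_stalk v y -> in_stalk (sopp F v) y;
  sl_act : forall g v y, in_stalk v y -> in_stalk (sact F g v) (act g y);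
  sl_addA : forall u v w y, in_stalk u y -> in_stalk v y -> in_stalk w y ->
     sadd F (sadd F u v) w = sadd F u (sadd F v w);
  sl_addC : forall v w y, in_stalk v y -> in_stalk w y -> sadd F v w = sadd F w v;
  sl_add0l : forall v y, in_stalk v y -> sadd F (szero F y) v = v;
  sl_addN : forall v y, in_stalk v y -> sadd F v (sopp F v) = szero F y;
  sl_Gamma0 : forall W, Gamma F W (szero F);
  sl_GammaD : forall W s1 s2, Gamma F W s1 -> Gamma F W s2 ->
     Gamma F W (fun z => sadd F (s1 z) (s2 z));
  sl_GammaN : forall W s, Gamma F W s -> Gamma F W (fun z => sopp F (s z));
  sl_zero_open : forall W s u, Gamma F W s -> W u -> s u = szero F u ->
     exists V, [/\ open V, V u & forall z, W z -> V z -> s z = szero F z];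
  sl_actD : forall g v w y, in_stalk v y -> in_stalk w y ->
     sact F g (sadd F v w) = sadd F (sact F g v) (sact F g w);
  sl_act0 : forall g y, sact F g (szero F y) = szero F (act g y);
  sl_actN : forall g v y, in_stalk v y -> sact F g (sopp F v) = sopp F (sact F g v);
  sl_Gamma_act : forall g W s, Gamma F W s ->
     Gamma F (act g @` W) (fun z => sact F g (s (act (inv g) z)))
}.

Section Families.
Variable F : shsp G X.
Local Notation fam := (set X * S F)%type.
Local Notation orb := (Defs.orbit act).
Local Notation eqIF := (@eqI G X act F).

Lemma Gamma_stalk W s y : Gamma F W s -> W y -> in_stalk (s y) y.
Proof. by case=> H _ Wy; apply: H. Qed.

Lemma Gamma_sub W W' s : W' `<=` W -> Gamma F W s -> Gamma F W' s.
Proof.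
move=> sub [H1 H2]; split=> [y /sub|y W'y Op oO Oy]; first exact: H1.
have [V [oV [Vy HV]]] := H2 y (sub _ W'y) Op oO Oy.
by exists V; split=> //; split=> // z /sub; apply: HV.
Qed.

Lemma Gamma_ext W s s' : (forall z, W z -> s z = s' z) ->
  Gamma F W s -> Gamma F W s'.
Proof.
move=> e [H1 H2]; split=> [y Wy|y Wy Op oO]; first by rewrite -e //; apply: H1.
rewrite -e // => Oy; have [V [oV [Vy HV]]] := H2 y Wy Op oO Oy.
by exists V; split=> //; split=> // z Wz Vz; rewrite -e //; apply: HV.
Qed.

Lemma Gamma_loc W s :
  (forall y, W y -> exists V, [/\ open V, V y & Gamma F (W `&` V) s]) ->
  Gamma F W s.
Proof.
move=> H; split=> [y Wy|y Wy Op oO Oy].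
  by have [V [_ Vy [H1 _]]] := H y Wy; apply: H1.
have [V [oV Vy [_ H2]]] := H y Wy.
have [V' [oV' [V'y HV']]] := H2 y (conj Wy Vy) Op oO Oy.
exists (V `&` V'); split; first exact: openI.
by split=> // z Wz [Vz V'z]; apply: HV'.
Qed.

(* A local family (W, sigma) is a section over the open set W of the product
   over orbits A of i_{A,*}(F|_A) when each component is a pointwise choice
   in the stalks: continuity is automatic because orbits are discrete. *)
Definition is_fam (r : fam) := secI act r.1 r.2.

Lemma is_famP (r : fam) : is_fam r <-> open r.1 /\
  forall A, orb A -> forall z, r.1 z -> A z -> in_stalk (r.2 A z) z.
Proof.
split=> [[o H]|[o H]]; split=> // A oA.
  by move=> z r1z Az; have [H1 _] := H A oA; apply: H1.
split=> [y [r1y Ay]|y [r1y Ay] Op oO Oy]; first exact: H.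
have [V [oV Vy HV]] := orbit_discrete oA Ay.
exists V; split=> //; split=> // z [_ Az] Vz.
by rewrite (HV z Vz Az).
Qed.

Lemma fam_open r : is_fam r -> open r.1.
Proof. by case. Qed.

Lemma fam_stalk r A z : is_fam r -> orb A -> r.1 z -> A z -> in_stalk (r.2 A z) z.
Proof. by move=> /is_famP [_ H] oA rz Az; apply: H. Qed.

Definition fam_bin (op : car F -> car F -> car F) (r1 r2 : fam) : fam :=
  (r1.1 `&` r2.1, fun A z => op (r1.2 A z) (r2.2 A z)).
Definition fam_map (f : car F -> car F) (r : fam) : fam :=
  (r.1, fun A z => f (r.2 A z)).
Definition fam_act g (r : fam) : fam :=
  (act g @` r.1, fun A z => sact F g (r.2 A (act (inv g) z))).
Definition fam0 : fam := ([set: X], fun _ z => szero F z).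
Definition fam_res (r : fam) (V : set X) : fam := (r.1 `&` V, r.2).

Lemma is_fam_bin op r1 r2 :
  (forall v w y, in_stalk v y -> in_stalk w y -> in_stalk (op v w) y) ->
  is_fam r1 -> is_fam r2 -> is_fam (fam_bin op r1 r2).
Proof.
move=> op_stalk /is_famP [o1 H1] /is_famP [o2 H2]; apply/is_famP.
split=> [|A oA z [z1 z2] Az /=]; first exact: openI.
by apply: op_stalk; [apply: H1 | apply: H2].
Qed.

Lemma is_fam_res r V : is_fam r -> open V -> is_fam (fam_res r V).
Proof.
move=> /is_famP [o1 H1] oV; apply/is_famP; split; first exact: openI.
by move=> A oA z [z1 _] Az; apply: H1.
Qed.

Lemma eqI_sym y r r' : eqIF y r r' -> eqIF y r' r.
Proof.
case=> W [oW Wy sub H]; exists W; split=> //; first by move=> z /sub [].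
by move=> A oA z Wz Az; rewrite H.
Qed.

Lemma eqI_trans y r r' r'' : eqIF y r r' -> eqIF y r' r'' -> eqIF y r r''.
Proof.
case=> W [oW Wy sub H] [W' [oW' W'y sub' H']]; exists (W `&` W'); split=> //.
- exact: openI.
- by move=> z [/sub [? _] /sub' [_ ?]].
- by move=> A oA z [Wz W'z] Az; rewrite H // H'.
Qed.

Lemma eqI_dom y r r' : eqIF y r r' -> r.1 y /\ r'.1 y.
Proof. by case=> W [_ Wy sub _]; apply: sub. Qed.

Lemma eqI_loc y r r' : eqIF y r r' ->
  exists W, [/\ open W, W y & forall z, W z -> eqIF z r r'].
Proof. by case=> W [oW Wy sub H]; exists W; split=> // z Wz; exists W; split. Qed.

Lemma eqI_bin op y r1 r1' r2 r2' : eqIF y r1 r1' -> eqIF y r2 r2' ->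
  eqIF y (fam_bin op r1 r2) (fam_bin op r1' r2').
Proof.
case=> W [oW Wy sub H] [W' [oW' W'y sub' H']]; exists (W `&` W'); split=> //.
- exact: openI.
- by move=> z [/sub [? ?] /sub' [? ?]].
- by move=> A oA z [Wz W'z] Az /=; rewrite H // H'.
Qed.

Lemma eqI_act g y r r' : eqIF y r r' -> eqIF (act g y) (fam_act g r) (fam_act g r').
Proof.
case=> W [oW Wy sub H]; exists (act g @` W); split.
- exact: open_img.
- by exists y.
- by move=> z [w /sub [r1w r1'w] <-]; split; exists w.
- move=> A oA z [w Ww <-] Az /=; rewrite actK H //.
  exact: orbit_actV Az.
Qed.

Lemma eqI_res y r V : open r.1 -> open V -> r.1 y -> V y -> eqIF y (fam_res r V) r.
Proof.
move=> o oV ry Vy; exists (r.1 `&` V); split=> //; first exact: openI.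
by move=> z [? ?].
Qed.

Lemma eqI_ptw y (r r' : fam) W : open W -> W y -> W `<=` r.1 `&` r'.1 ->
  (forall A z, orb A -> W z -> A z -> r.2 A z = r'.2 A z) -> eqIF y r r'.
Proof. by move=> oW Wy sub H; exists W; split=> // A oA z Wz Az; apply: H. Qed.

Definition PER (eqv : X -> fam -> fam -> Prop) :=
  (forall y r r', is_fam r -> is_fam r' -> eqv y r r' -> eqv y r' r) /\
  (forall y r r' r'', is_fam r -> is_fam r' -> is_fam r'' ->
     eqv y r r' -> eqv y r' r'' -> eqv y r r'').
Definition REFL (eqv : X -> fam -> fam -> Prop) :=
  forall y r, is_fam r -> r.1 y -> eqv y r r.

Lemma germ_eq eqv y r r' : PER eqv -> is_fam r -> is_fam r' -> eqv y r r' ->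
  germ act eqv y r = germ act eqv y r'.
Proof.
move=> [Hs Ht] sr sr' e; congr pair; apply/seteqP; split=> q [sq eq]; split=> //.
  exact: Ht e.
by apply: Ht eq _ => //; apply: Hs.
Qed.

Lemma germ_rel eqv y r r' : REFL eqv -> is_fam r -> r.1 y ->
  germ act eqv y r = germ act eqv y r' -> eqv y r r'.
Proof.
move=> Hr sr ry e.
have : (germ act eqv y r).2 r by split=> //; apply: Hr.
by rewrite e => -[].
Qed.

Lemma eqI_PER : PER eqIF.
Proof.
split; first by move=> y r r' _ _; apply: eqI_sym.
by move=> y r r' r'' _ _ _; apply: eqI_trans.
Qed.

Lemma eqI_REFL : REFL eqIF.
Proof. by move=> y r sr ry; exists r.1; split=> //; apply: fam_open. Qed.

End Families.

Section StalkAlgebra.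
Variable F : shsp G X.
Hypothesis laws : SheafLaws F.
Local Notation fam := (set X * S F)%type.
Local Notation eqIF := (@eqI G X act F).
Local Notation eqCF := (@eqC G X act F).
Local Notation add := (sadd F).
Local Notation opp := (sopp F).
Local Notation zero := (szero F).

Lemma addr0 v y : in_stalk v y -> add v (zero y) = v.
Proof. by move=> fv; rewrite (sl_addC laws fv (sl_zero laws y)) (sl_add0l laws fv). Qed.

Lemma addNr v y : in_stalk v y -> add (opp v) v = zero y.
Proof. by move=> fv; rewrite (sl_addC laws (sl_opp laws fv) fv) (sl_addN laws fv). Qed.

Lemma addI a b c y : in_stalk a y -> in_stalk b y -> in_stalk c y ->
  add a b = add a c -> b = c.
Proof.
move=> fa fb fc e.
rewrite -(sl_add0l laws fb) -(sl_add0l laws fc) -(addNr fa).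
by rewrite (sl_addA laws (sl_opp laws fa) fa fb) (sl_addA laws (sl_opp laws fa) fa fc) e.
Qed.

Lemma addACA a b c d y : in_stalk a y -> in_stalk b y -> in_stalk c y -> in_stalk d y ->
  add (add a b) (add c d) = add (add a c) (add b d).
Proof.
move=> fa fb fc fd.
rewrite (sl_addA laws fa fb (sl_add laws fc fd)) -(sl_addA laws fb fc fd).
rewrite (sl_addC laws fb fc) (sl_addA laws fc fb fd).
by rewrite -(sl_addA laws fa fc (sl_add laws fb fd)).
Qed.

Lemma oppD a b y : in_stalk a y -> in_stalk b y -> opp (add a b) = add (opp a) (opp b).
Proof.
move=> fa fb; have fab := sl_add laws fa fb.
have fNa := sl_opp laws fa; have fNb := sl_opp laws fb.
apply: (addI fab (sl_opp laws fab) (sl_add laws fNa fNb)).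
rewrite (sl_addN laws fab) (addACA fa fb fNa fNb).
by rewrite (sl_addN laws fa) (sl_addN laws fb) (sl_add0l laws (sl_zero laws y)).
Qed.

Lemma is_fam_add (r1 r2 : fam) : is_fam r1 -> is_fam r2 -> is_fam (fam_bin add r1 r2).
Proof. exact: is_fam_bin (sl_add laws). Qed.

Lemma is_fam_opp (r : fam) : is_fam r -> is_fam (fam_map opp r).
Proof.
move=> /is_famP [o1 H1]; apply/is_famP; split=> // A oA z z1 Az /=.
by apply: (sl_opp laws); apply: H1.
Qed.

Lemma is_fam_act g (r : fam) : is_fam r -> is_fam (fam_act g r).
Proof.
move=> /is_famP [o1 H1]; apply/is_famP; split; first exact: open_img.
move=> A oA z [w r1w <-] Az /=; rewrite actK; apply: (sl_act laws).
by apply: H1 => //; apply: orbit_actV Az.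
Qed.

Lemma is_fam0 : is_fam (fam0 F).
Proof.
apply/is_famP; split=> [|A oA z _ _ /=]; [exact: openT | exact: (sl_zero laws)].
Qed.

Lemma eqC_loc y r r' : eqCF y r r' ->
  exists W, [/\ open W, W y & forall z, W z -> eqCF z r r'].
Proof. by case=> W [t [oW Wy sub gt H]]; exists W; split=> // z Wz; exists W, t. Qed.

Lemma eqC_REFL : REFL eqCF.
Proof.
move=> y r sr ry; exists r.1, zero; split=> //; first exact: fam_open.
  exact: (sl_Gamma0 laws).
by move=> A oA z rz Az; rewrite (addr0 (fam_stalk sr oA rz Az)).
Qed.

Lemma eqC_of_eqI y r r' : is_fam r' -> eqIF y r r' -> eqCF y r r'.
Proof.
move=> sr' [W [oW Wy sub H]]; exists W, zero; split=> //.
  exact: (sl_Gamma0 laws).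
move=> A oA z Wz Az; rewrite H //; have [_ r'z] := sub z Wz.
by rewrite (addr0 (fam_stalk sr' oA r'z Az)).
Qed.

Lemma eqC_PER : PER eqCF.
Proof.
split.
- move=> y r r' sr sr' [W [t [oW Wy sub gt H]]].
  exists W, (fun z => opp (t z)); split=> //.
  + by move=> z /sub [? ?].
  + exact: (sl_GammaN laws).
  + move=> A oA z Wz Az; have [r1 r'1] := sub z Wz.
    have fr' := fam_stalk sr' oA r'1 Az; have ft := Gamma_stalk gt Wz.
    rewrite H // (sl_addA laws fr' ft (sl_opp laws ft)) (sl_addN laws ft).
    by rewrite (addr0 fr').
- move=> y r r' r'' sr sr' sr'' [W [t [oW Wy sub gt H]]]
    [W' [t' [oW' W'y sub' gt' H']]].
  exists (W `&` W'), (fun z => add (t' z) (t z)); split=> //.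
  + exact: openI.
  + by move=> z [/sub [? ?] /sub' [? ?]].
  + by apply: (sl_GammaD laws); [apply: (Gamma_sub _ gt') | apply: (Gamma_sub _ gt)];
      move=> ? [].
  + move=> A oA z [Wz W'z] Az; have [_ r''1] := sub' z W'z.
    have fr'' := fam_stalk sr'' oA r''1 Az.
    have ft := Gamma_stalk gt Wz; have ft' := Gamma_stalk gt' W'z.
    by rewrite H // H' // (sl_addA laws fr'' ft' ft).
Qed.

Lemma eqC_add y a b c d : is_fam c -> is_fam d ->
  eqCF y a c -> eqCF y b d -> eqCF y (fam_bin add a b) (fam_bin add c d).
Proof.
move=> sc sd [W [t [oW Wy sub gt H]]] [W' [t' [oW' W'y sub' gt' H']]].
exists (W `&` W'), (fun z => add (t z) (t' z)); split=> //.
- exact: openI.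
- by move=> z [/sub [? ?] /sub' [? ?]]; split; split.
- by apply: (sl_GammaD laws); [apply: (Gamma_sub _ gt) | apply: (Gamma_sub _ gt')];
    move=> ? [].
- move=> A oA z [Wz W'z] Az /=; have [_ c1] := sub z Wz; have [_ d1] := sub' z W'z.
  rewrite H // H' //.
  by apply: addACA; [apply: (fam_stalk sc) | apply: (Gamma_stalk gt)
    | apply: (fam_stalk sd) | apply: (Gamma_stalk gt')].
Qed.

Lemma eqC_opp y a c : is_fam c -> eqCF y a c -> eqCF y (fam_map opp a) (fam_map opp c).
Proof.
move=> sc [W [t [oW Wy sub gt H]]].
exists W, (fun z => opp (t z)); split=> //; first exact: (sl_GammaN laws).
move=> A oA z Wz Az /=; have [_ c1] := sub z Wz.
by rewrite H // (oppD (fam_stalk sc oA c1 Az) (Gamma_stalk gt Wz)).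
Qed.

Lemma eqC_act g y a c : is_fam c -> eqCF y a c ->
  eqCF (act g y) (fam_act g a) (fam_act g c).
Proof.
move=> sc [W [t [oW Wy sub gt H]]].
exists (act g @` W), (fun z => sact F g (t (act (inv g) z))); split.
- exact: open_img.
- by exists y.
- by move=> z [w /sub [? ?] <-]; split; exists w.
- exact: (sl_Gamma_act laws).
- move=> A oA z [w Ww <-] Az /=; rewrite actK.
  have Aw : A w by apply: orbit_actV Az.
  have [_ c1] := sub w Ww.
  by rewrite H // (sl_actD laws _ (fam_stalk sc oA c1 Aw) (Gamma_stalk gt Ww)).
Qed.

Section GermOps.
Variable eqv : X -> fam -> fam -> Prop.
Hypothesis eP : PER eqv.
Hypothesis eR : REFL eqv.

Lemma germ_add (Hc : forall y (a b c d : fam), is_fam a -> is_fam b -> is_fam c -> is_fam d ->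
    eqv y a c -> eqv y b d -> eqv y (fam_bin add a b) (fam_bin add c d))
  y r1 r2 : is_fam r1 -> is_fam r2 -> r1.1 y -> r2.1 y ->
  gadd act eqv (germ act eqv y r1) (germ act eqv y r2) =
  germ act eqv y (fam_bin add r1 r2).
Proof.
move=> s1 s2 y1 y2; congr pair; apply/seteqP; split=> r [sr H]; split=> //.
  case: H => a [b [[sa ea] [sb eb] e]].
  by apply: (eP.2 _ _ _ _ sr _ _ e); try apply: is_fam_add => //; apply: Hc.
by exists r1, r2; split=> //; split=> //; apply: eR.
Qed.

Lemma germ_opp (Hc : forall y (a c : fam), is_fam a -> is_fam c -> eqv y a c ->
    eqv y (fam_map opp a) (fam_map opp c))
  y r : is_fam r -> r.1 y ->
  gopp act eqv (germ act eqv y r) = germ act eqv y (fam_map opp r).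
Proof.
move=> s1 y1; congr pair; apply/seteqP; split=> q [sq H]; split=> //.
  case: H => a [[sa ea] e].
  by apply: (eP.2 _ _ _ _ sq _ _ e); try apply: is_fam_opp => //; apply: Hc.
by exists r; split=> //; split=> //; apply: eR.
Qed.

Lemma germ_act (Hc : forall g y (a c : fam), is_fam a -> is_fam c -> eqv y a c ->
    eqv (act g y) (fam_act g a) (fam_act g c))
  g y r : is_fam r -> r.1 y ->
  gact inv act eqv g (germ act eqv y r) = germ act eqv (act g y) (fam_act g r).
Proof.
move=> s1 y1; congr pair; apply/seteqP; split=> q [sq H]; split=> //.
  case: H => a [[sa ea] e].
  by apply: (eP.2 _ _ _ _ sq _ _ e); try apply: is_fam_act => //; apply: Hc.
by exists r; split=> //; split=> //; apply: eR.
Qed.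
End GermOps.

Lemma germI_act g y r : is_fam r -> r.1 y ->
  gact inv act eqIF g (germ act eqIF y r) = germ act eqIF (act g y) (fam_act g r).
Proof.
apply: germ_act; [exact: eqI_PER | exact: eqI_REFL|].
by move=> *; apply: eqI_act.
Qed.

Lemma germC_add y r1 r2 : is_fam r1 -> is_fam r2 -> r1.1 y -> r2.1 y ->
  gadd act eqCF (germ act eqCF y r1) (germ act eqCF y r2) =
  germ act eqCF y (fam_bin add r1 r2).
Proof.
apply: germ_add; [exact: eqC_PER | exact: eqC_REFL |].
by move=> y' a b c d _ _ sc sd; apply: eqC_add.
Qed.

Lemma germC_opp y r : is_fam r -> r.1 y ->
  gopp act eqCF (germ act eqCF y r) = germ act eqCF y (fam_map opp r).
Proof.
apply: germ_opp; [exact: eqC_PER | exact: eqC_REFL |].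
by move=> y' a c _ sc; apply: eqC_opp.
Qed.

Lemma germC_act g y r : is_fam r -> r.1 y ->
  gact inv act eqCF g (germ act eqCF y r) = germ act eqCF (act g y) (fam_act g r).
Proof.
apply: germ_act; [exact: eqC_PER | exact: eqC_REFL |].
by move=> g' y' a c _ sc; apply: eqC_act.
Qed.

Lemma qmap_germ y r : is_fam r -> r.1 y ->
  qmap act (germ act eqIF y r) = germ act eqCF y r.
Proof.
move=> sr ry; congr pair; apply/seteqP; split=> q [sq H]; split=> //.
  case: H => r0 [[s0 e0] e].
  by apply: (eqC_PER.2 _ _ _ _ sq s0 sr e); apply: eqC_of_eqI.
by exists r; split; [split=> //; apply: eqI_REFL | exact: H].
Qed.

End StalkAlgebra.

Section Product.
Variable F : shsp G X.
Hypothesis laws : SheafLaws F.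
Local Notation fam := (set X * S F)%type.
Local Notation orb := (Defs.orbit act).
Local Notation eqIF := (@eqI G X act F).
Local Notation eqCF := (@eqC G X act F).
Local Notation gI := (germ act eqIF).
Local Notation gC := (germ act eqCF).
Local Notation EprodF := (@Eprod G X inv act F).
Local Notation NOF := (@NO G X act F).

Definition germs_in (r : fam) (O : set (gcar F)) := forall z, r.1 z -> O (gI z r).

Definition germ_image (r : fam) : set (gcar F) := [set e | exists z, r.1 z /\ e = gI z r].

(* Families whose germs lie in the G-product; they represent the sections
   of I^0(F). *)
Definition in_prod (r : fam) := is_fam r /\ germs_in r EprodF.

Lemma gI_eq y r r' : is_fam r -> is_fam r' -> eqIF y r r' -> gI y r = gI y r'.
Proof. by move=> s s' e; apply: germ_eq => //; exact: eqI_PER. Qed.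

Lemma gI_rel y r r' : is_fam r -> r.1 y -> gI y r = gI y r' -> eqIF y r r'.
Proof. by move=> s ry e; apply: germ_rel e => //; exact: eqI_REFL. Qed.

Lemma gC_rel y r r' : is_fam r -> r.1 y -> gC y r = gC y r' -> eqCF y r r'.
Proof. by move=> s ry e; apply: germ_rel e => //; exact: (eqC_REFL laws). Qed.

Lemma gC_eq y r r' : is_fam r -> is_fam r' -> eqCF y r r' -> gC y r = gC y r'.
Proof. by move=> s s' e; apply: germ_eq => //; exact: (eqC_PER laws). Qed.

Lemma gC_of_eqI y r r' : is_fam r -> is_fam r' -> eqIF y r r' -> gC y r = gC y r'.
Proof. by move=> s s' e; apply: gC_eq => //; apply: (eqC_of_eqI laws). Qed.

Lemma gI_res y r V : is_fam r -> open V -> r.1 y -> V y -> gI y (fam_res r V) = gI y r.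
Proof.
move=> s oV ry Vy; apply: gI_eq => //; first exact: (is_fam_res s oV).
by apply: eqI_res => //; apply: fam_open.
Qed.

Lemma gC_rel_pointwise y r r' : is_fam r -> r.1 y -> gC y r = gC y r' ->
  exists W t, [/\ open W, W y, Gamma F W t &
    forall z, W z -> r.2 (range (fun g => act g z)) z =
                     sadd F (r'.2 (range (fun g => act g z)) z) (t z)].
Proof.
move=> sr ry /(gC_rel sr ry) [W [t [oW Wy _ gt H]]].
exists W, t; split=> // z Wz.
by have [oz zz] := orbit_of z; apply: H.
Qed.

Lemma Eprod_rep e : EprodF e -> exists r, [/\ in_prod r, r.1 e.1 & e = gI e.1 r].
Proof.
case=> O [NOO GO Oe]; have [_ H] := NOO.
have [U [sg [s Ue ee HU]]] := H e Oe.
exists (U, sg); split=> //; split=> // z Uz.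
by exists O; split=> //; apply: HU.
Qed.

Lemma NO_germ_image r : is_fam r -> NOF (germ_image r).
Proof.
case: r => U sg s; split; first by move=> e [z [Uz ->]]; exists U, sg; split.
move=> e [z [Uz ->]]; exists U, sg; split=> //.
by move=> y Uy; exists y.
Qed.

Lemma NO_near O r z : NOF O -> O (gI z r) -> is_fam r -> r.1 z ->
  exists W, [/\ open W, W z & forall u, W u -> r.1 u -> O (gI u r)].
Proof.
move=> [_ H] Oz s rz; have [U [sg [sU Uz ee HU]]] := H _ Oz.
have [W [oW Wz HW]] := eqI_loc (gI_rel s rz ee).
exists W; split=> // u Wu ru.
have [_ Uu] := eqI_dom (HW u Wu).
by rewrite (@gI_eq u r (U, sg) s sU (HW u Wu)); apply: HU.
Qed.

Lemma Eprod_act g e : EprodF e -> EprodF (gact inv act eqIF g e).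
Proof. by case=> O [NOO [G1 G2] Oe]; exists O; split=> //; apply: G1. Qed.

Lemma in_prod_act g r : in_prod r -> in_prod (fam_act g r).
Proof.
case=> s H; split; first exact: (is_fam_act laws).
by move=> z [w rw <-]; rewrite -(germI_act laws) //; apply: Eprod_act; apply: H.
Qed.

(* A global G-invariant family has all its germs in the G-product: its germ
   image is itself a G-stable open set on which the action is continuous. *)
Lemma in_prod_invariant (phi : S F) : is_fam ([set: X], phi) ->
  (forall g A z, orb A -> A z -> sact F g (phi A (act (inv g) z)) = phi A z) ->
  in_prod ([set: X], phi).
Proof.
move=> s Hinv; set r := ([set: X], phi).
have act_germ g z : gact inv act eqIF g (gI z r) = gI (act g z) r.
  rewrite (germI_act laws) //; apply: gI_eq; [exact: (is_fam_act laws) | exact: s | ].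
  apply: (@eqI_ptw _ _ _ _ setT) => //; first exact: openT.
    by move=> u _; split=> //; exists (act (inv g) u) => //; rewrite actKV.
  by move=> A u oA _ Au /=; apply: Hinv.
split=> // z _; exists (germ_image r); split; [exact: NO_germ_image | | by exists z].
split=> [g e [w [_ ->]]|g e [w [_ ->]] N NON]; first by exists (act g w); rewrite act_germ.
rewrite act_germ => Ngw.
have [W [oW Wgw HW]] := NO_near NON Ngw s I.
have [V [V' [oV Vg oV' V'w HVV]]] := act_nbhd oW Wgw.
exists V, (germ_image (fam_res r V')); split=> //.
- by apply: NO_germ_image; apply: is_fam_res.
- by exists w; split; [split | rewrite gI_res].
- move=> g' e' Vg' [u [[_ V'u] ->]] _.
  by rewrite gI_res // act_germ; apply: HW => //; apply: HVV.
Qed.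

Lemma act_germ_in_image g w r W : is_fam r -> r.1 w -> open W -> W (act g w) ->
  germ_image (fam_res (fam_act g r) W) (gact inv act eqIF g (gI w r)).
Proof.
move=> sr rw oW Wgw; exists (act g w); split; first by split=> //; exists w.
by rewrite (germI_act laws) // gI_res //; [exact: (is_fam_act laws) | exists w].
Qed.

Lemma germ_image_act g g' u r W : is_fam r -> r.1 u -> open W ->
  germ_image (fam_res (fam_act g r) W) (gact inv act eqIF g' (gI u r)) ->
  W (act g' u) /\ eqIF (act g' u) (fam_act g' r) (fam_act g r).
Proof.
move=> sr ru oW [u' [[gu Wu'] e]]; rewrite (germI_act laws) // in e.
have eu : act g' u = u' by have := congr1 fst e.
subst u'; rewrite gI_res // in e; last exact: (is_fam_act laws).
by split=> //; apply: gI_rel e; [exact: (is_fam_act laws) | exists u].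
Qed.

Section BinOp.
Variable op : car F -> car F -> car F.
Hypothesis op_stalk : forall v w y, in_stalk v y -> in_stalk w y -> in_stalk (op v w) y.
Hypothesis op_act : forall g v w y, in_stalk v y -> in_stalk w y ->
  sact F g (op v w) = op (sact F g v) (sact F g w).

Lemma eqI_act_bin g a b y : is_fam a -> is_fam b -> (fam_bin op a b).1 y ->
  eqIF (act g y) (fam_act g (fam_bin op a b)) (fam_bin op (fam_act g a) (fam_act g b)).
Proof.
move=> sa sb yab.
apply: (@eqI_ptw _ _ _ _ (act g @` (a.1 `&` b.1))).
- by apply: open_img; apply: openI; apply: fam_open.
- by exists y.
- by move=> z [u [au bu] <-]; split; [exists u | split; exists u].
- move=> A z oA [u [au bu] <-] Az /=; rewrite actK.
  have Au : A u by apply: orbit_actV Az.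
  by apply: op_act; [apply: (fam_stalk sa) | apply: (fam_stalk sb)].
Qed.

Lemma germI_act_bin g a b y : is_fam a -> is_fam b -> (fam_bin op a b).1 y ->
  gact inv act eqIF g (gI y (fam_bin op a b)) =
  gI (act g y) (fam_bin op (fam_act g a) (fam_act g b)).
Proof.
move=> sa sb yab; have sab := is_fam_bin op_stalk sa sb.
rewrite (germI_act laws) //; apply: gI_eq; first exact: (is_fam_act laws g sab).
  by apply: (is_fam_bin op_stalk); apply: (is_fam_act laws).
exact: eqI_act_bin.
Qed.

(* Given G-stable sets O1, O2 of the naive product on which the action is
   continuous, the germs of op-combinations of families with germs in O1
   and O2 form an open set with the same property. *)
Section BinGerms.
Variables O1 O2 : set (gcar F).
Hypotheses (GC1 : Gcont inv act O1) (GC2 : Gcont inv act O2).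

Definition bin_germs : set (gcar F) := [set e | exists ra rb w,
  [/\ is_fam ra, is_fam rb, germs_in ra O1, germs_in rb O2
    & [/\ ra.1 w, rb.1 w & e = gI w (fam_bin op ra rb)]]].

Lemma NO_bin_germs : NOF bin_germs.
Proof.
split=> e [ra [rb [w [s1 s2 h1 h2 [w1 w2 ->]]]]];
  exists (ra.1 `&` rb.1), (fun A z => op (ra.2 A z) (rb.2 A z));
  split=> //; try exact: (is_fam_bin op_stalk s1 s2).
by move=> u [u1 u2]; exists ra, rb, u; split.
Qed.

Lemma bin_germs_stable g e : bin_germs e -> bin_germs (gact inv act eqIF g e).
Proof.
move=> [ra [rb [w [s1 s2 h1 h2 [w1 w2 ->]]]]]; rewrite germI_act_bin //.
exists (fam_act g ra), (fam_act g rb), (act g w); split.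
- exact: (is_fam_act laws).
- exact: (is_fam_act laws).
- by move=> u [v rv <-]; rewrite -(germI_act laws) //; apply: GC1.1; apply: h1.
- by move=> u [v rv <-]; rewrite -(germI_act laws) //; apply: GC2.1; apply: h2.
by split=> //; exists w.
Qed.

Lemma bin_germs_cont g e : bin_germs e -> forall N, NOF N ->
  N (gact inv act eqIF g e) -> exists V M, [/\ open V, V g, NOF M, M e &
    forall g' e', V g' -> M e' -> bin_germs e' -> N (gact inv act eqIF g' e')].
Proof.
move=> [ra [rb [w [s1 s2 h1 h2 [w1 w2 ->]]]]] N NON.
set rho := fam_bin op (fam_act g ra) (fam_act g rb).
have srho : is_fam rho by apply: (is_fam_bin op_stalk); apply: (is_fam_act laws).
rewrite germI_act_bin // => Nrho.
have [W [oW Ww HW]] := NO_near NON Nrho srho (conj (ex_intro2 _ _ w w1 erefl)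
  (ex_intro2 _ _ w w2 erefl)).
have [V1 [M1 [oV1 V1g NOM1 M1a HM1]]] := GC1.2 g (gI w ra) (h1 w w1) _
  (NO_germ_image (is_fam_res (is_fam_act laws g s1) oW))
  (act_germ_in_image s1 w1 oW Ww).
have [V2 [M2 [oV2 V2g NOM2 M2b HM2]]] := GC2.2 g (gI w rb) (h2 w w2) _
  (NO_germ_image (is_fam_res (is_fam_act laws g s2) oW))
  (act_germ_in_image s2 w2 oW Ww).
have [U1 [oU1 U1w HU1]] := NO_near NOM1 M1a s1 w1.
have [U2 [oU2 U2w HU2]] := NO_near NOM2 M2b s2 w2.
have oU : open (U1 `&` U2) by apply: openI.
set rr := fam_res (fam_bin op ra rb) (U1 `&` U2).
have sab := is_fam_bin op_stalk s1 s2.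
exists (V1 `&` V2), (germ_image rr); split.
- exact: openI.
- by split.
- by apply: NO_germ_image; apply: is_fam_res.
- by exists w; split; [split | rewrite /rr gI_res].
move=> g' e' [Vg'1 Vg'2] [u [[[u1 u2] [U1u U2u]] ->]] _.
rewrite /rr gI_res // germI_act_bin //.
have [Wu E1] := germ_image_act s1 u1 oW (HM1 g' _ Vg'1 (HU1 u U1u u1) (h1 u u1)).
have [_ E2] := germ_image_act s2 u2 oW (HM2 g' _ Vg'2 (HU2 u U2u u2) (h2 u u2)).
rewrite (gI_eq _ srho (eqI_bin op E1 E2)); last first.
  by apply: (is_fam_bin op_stalk); apply: (is_fam_act laws).
by apply: HW => //; split; [apply: (eqI_dom E1).2 | apply: (eqI_dom E2).2].
Qed.

End BinGerms.

Lemma in_prod_bin a b : in_prod a -> in_prod b -> in_prod (fam_bin op a b).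
Proof.
move=> [sa Ha] [sb Hb]; split; first exact: (is_fam_bin op_stalk sa sb).
move=> z [az bz].
have [O1 [NO1 GC1 O1z]] := Ha z az.
have [O2 [NO2 GC2 O2z]] := Hb z bz.
have [W1 [oW1 W1z HW1]] := NO_near NO1 O1z sa az.
have [W2 [oW2 W2z HW2]] := NO_near NO2 O2z sb bz.
exists (bin_germs O1 O2); split.
- exact: NO_bin_germs.
- by split; [apply: bin_germs_stable | apply: bin_germs_cont].
exists (fam_res a W1), (fam_res b W2), z; split.
- exact: is_fam_res.
- exact: is_fam_res.
- by move=> u [au W1u]; rewrite gI_res //; apply: HW1.
- by move=> u [bu W2u]; rewrite gI_res //; apply: HW2.
split; [by split | by split |].
apply: gI_eq; [exact: (is_fam_bin op_stalk) | by apply: (is_fam_bin op_stalk); apply: is_fam_res |].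
by apply: eqI_bin; apply: eqI_sym; apply: eqI_res => //; apply: fam_open.
Qed.

End BinOp.

Lemma in_prod_add a b : in_prod a -> in_prod b -> in_prod (fam_bin (sadd F) a b).
Proof. by apply: in_prod_bin; [apply: (sl_add laws) | apply: (sl_actD laws)]. Qed.

Lemma in_prod_opp a : in_prod a -> in_prod (fam_map (sopp F) a).
Proof.
move=> EPa; have [sa _] := EPa.
have [_ H] := @in_prod_bin (fun v _ => sopp F v) (fun v w y fv _ => sl_opp laws fv)
  (fun g v w y fv _ => sl_actN laws g fv) a a EPa EPa.
split=> [|z az]; first exact: (is_fam_opp laws).
have <- : gI z (fam_bin (fun v _ => sopp F v) a a) = gI z (fam_map (sopp F) a).
  apply: gI_eq; [exact: (is_fam_bin (fun v w y fv _ => sl_opp laws fv) sa sa)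
    | exact: (is_fam_opp laws) |].
  by apply: (@eqI_ptw _ _ _ _ a.1) => //; apply: fam_open.
exact: H z (conj az az).
Qed.

Lemma in_prod0 : in_prod (fam0 F).
Proof.
apply: in_prod_invariant; first exact: (is_fam0 laws).
by move=> g A z _ _; rewrite (sl_act0 laws) actKV.
Qed.

Lemma Gamma_I_germs r W : in_prod r -> W `<=` r.1 ->
  Gamma (I0 inv act F) W (fun z => gI z r).
Proof.
move=> [sr Hr] sub; split=> [y Wy|y Wy Op [O' [NO' ->]] [O'y Ey]].
  by split=> //; apply: Hr; apply: sub.
have [W' [oW' W'y HW']] := NO_near NO' O'y sr (sub y Wy).
exists W'; split=> //; split=> // z Wz W'z.
by split; [apply: HW' => //; apply: sub | apply: Hr; apply: sub].
Qed.

Lemma Gamma_I_rep W t y : Gamma (I0 inv act F) W t -> W y ->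
  exists r V, [/\ in_prod r, open V, V y &
    forall z, W z -> V z -> r.1 z /\ t z = gI z r].
Proof.
move=> [H1 H2] Wy; have [py fy] := H1 y Wy.
have [r [EPr ry ty]] := Eprod_rep py.
rewrite /= in fy; rewrite fy in ry ty.
have oO : sopen (I0 inv act F) (germ_image r `&` EprodF).
  by exists (germ_image r); split=> //; apply: NO_germ_image; case: EPr.
have [V [oV [Vy HV]]] := H2 y Wy _ oO (conj (ex_intro _ y (conj ry ty)) py).
exists r, V; split=> // z Wz Vz.
have [[u [ru tz]] _] := HV z Wz Vz.
have [_ fz] := H1 z Wz; rewrite /= tz in fz.
by have uz : u = z := fz; subst z.
Qed.

Lemma stalk_coker v y : @in_stalk (Coker inv act F) v y <->
  exists r, [/\ in_prod r, r.1 y & v = gC y r].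
Proof.
split.
  case=> -[e Ee <-] fy; have [r [EPr re ee]] := Eprod_rep Ee.
  rewrite /= in fy; rewrite ee (qmap_germ laws) // in fy *; last exact: EPr.1.
  by exists r; split=> //; rewrite -fy.
case=> r [EPr ry ->]; split=> //.
exists (gI y r); first by apply: EPr.2.
by apply: (qmap_germ laws) => //; exact: EPr.1.
Qed.

(* The classes of the germs of a family in the G-product form an open set of
   coker(delta_F): its preimage in I^0(F) is open. *)
Lemma open_coker_germs r : in_prod r ->
  sopen (Coker inv act F) [set v | exists z, r.1 z /\ v = gC z r].
Proof.
move=> [sr Hr]; split.
  move=> v [z [rz ->]]; exists (gI z r); first by apply: Hr.
  exact: (qmap_germ laws).
set P := [set e | EprodF e /\ (exists z, r.1 z /\ qmap act e = gC z r)].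
exists P; split; last first.
  by apply/seteqP; split=> e; [move=> Pe; split=> //; case: Pe | case].
split=> [e [[O [[sub _] _ Oe]] _]|e [Ee [z [rz qe]]]]; first exact: sub.
have [r' [[sr' Hr'] r'e ee]] := Eprod_rep Ee.
rewrite ee (qmap_germ laws) // in qe.
have ez : e.1 = z by have := congr1 fst qe.
rewrite ez in qe r'e ee.
have [W [oW Wz HW]] := eqC_loc (gC_rel sr' r'e qe).
have oWr : open (W `&` r.1) by apply: openI => //; apply: fam_open.
have sr'W := is_fam_res sr' oWr.
exists (r'.1 `&` (W `&` r.1)), r'.2; split=> //.
- by rewrite ez; split=> //; split.
- by rewrite ez ee; symmetry; apply: (@gI_res z r' (W `&` r.1)).
move=> u [r'u [Wu ru]]; split.
  by rewrite (@gI_res u r' (W `&` r.1)) //; exact: Hr'.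
exists u; split=> //; rewrite (qmap_germ laws) //.
apply: gC_eq => //; apply: ((eqC_PER laws).2 _ _ r') => //.
  by apply: (eqC_of_eqI laws) => //; apply: eqI_res => //; exact: fam_open.
exact: HW.
Qed.

Lemma Gamma_C_germs r W : in_prod r -> W `<=` r.1 ->
  Gamma (Coker inv act F) W (fun z => gC z r).
Proof.
move=> EPr sub; split.
  by move=> y Wy; apply/stalk_coker; exists r; split=> //; apply: sub.
have [sr Hr] := EPr.
move=> y Wy Op [_ [O' [NO' eP]]] Oy.
have Py : [set e | EprodF e /\ Op (qmap act e)] (gI y r).
  by split; [apply: Hr; apply: sub | rewrite (qmap_germ laws) //; apply: sub].
rewrite eP in Py; case: Py => O'y _.
have [W' [oW' W'y HW']] := NO_near NO' O'y sr (sub y Wy).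
exists W'; split=> //; split=> // z Wz W'z.
have : [set e | EprodF e /\ Op (qmap act e)] (gI z r).
  by rewrite eP; split; [apply: HW' => //; apply: sub | apply: Hr; apply: sub].
by case=> _; rewrite (qmap_germ laws) //; apply: sub.
Qed.

Lemma Gamma_C_rep W s y : Gamma (Coker inv act F) W s -> W y ->
  exists r V, [/\ in_prod r, open V, V y &
    forall z, W z -> V z -> r.1 z /\ s z = gC z r].
Proof.
move=> gs Wy; have /stalk_coker [r [EPr ry sy]] := Gamma_stalk gs Wy.
have [_ H2] := gs.
have [V [oV [Vy HV]]] := H2 y Wy _ (open_coker_germs EPr) (ex_intro _ y (conj ry sy)).
exists r, V; split=> // z Wz Vz.
have [u [ru szu]] := HV z Wz Vz.
have [_ fz] := Gamma_stalk gs Wz; rewrite /= szu in fz.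
by have uz : u = z := fz; subst u.
Qed.

End Product.

(* coker(delta_F) satisfies the sheaf laws whenever F does: each law is
   checked on representing families, where it holds componentwise. *)
Section CokerLaws.
Variable F : shsp G X.
Hypothesis laws : SheafLaws F.
Local Notation C := (Coker inv act F).
Local Notation orb := (Defs.orbit act).
Local Notation gC := (germ act (@eqC G X act F)).
Local Notation add := (sadd F).
Local Notation stalkC := (stalk_coker laws).

Lemma gC_ptw y r r' W : is_fam r -> is_fam r' -> open W -> W y ->
  W `<=` r.1 `&` r'.1 ->
  (forall A z, orb A -> W z -> A z -> r.2 A z = r'.2 A z) -> gC y r = gC y r'.
Proof. by move=> sr sr' oW Wy sub H; apply: (gC_of_eqI laws) => //; apply: eqI_ptw H. Qed.

Lemma coker_stalk0 y : in_stalk (szero C y) y.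
Proof. by apply/stalkC; exists (fam0 F); split=> //; exact: (in_prod0 laws). Qed.

Lemma coker_stalkD v w y : in_stalk v y -> in_stalk w y -> in_stalk (sadd C v w) y.
Proof.
move=> /stalkC [a [EPa ay ->]] /stalkC [b [EPb bb ->]] /=.
rewrite (germC_add laws) //; try exact: EPa.1; try exact: EPb.1.
by apply/stalkC; exists (fam_bin add a b); split=> //; apply: (in_prod_add laws).
Qed.

Lemma coker_stalkN v y : in_stalk v y -> in_stalk (sopp C v) y.
Proof.
move=> /stalkC [a [EPa ay ->]] /=; rewrite (germC_opp laws) //; last exact: EPa.1.
by apply/stalkC; exists (fam_map (sopp F) a); split=> //; apply: (in_prod_opp laws).
Qed.

Lemma coker_stalk_act g v y : in_stalk v y -> in_stalk (sact C g v) (act g y).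
Proof.
move=> /stalkC [a [EPa ay ->]] /=; rewrite (germC_act laws) //; last exact: EPa.1.
apply/stalkC; exists (fam_act g a); split; first exact: (in_prod_act laws).
  by exists y.
by [].
Qed.

Lemma coker_addA u v w y : in_stalk u y -> in_stalk v y -> in_stalk w y ->
  sadd C (sadd C u v) w = sadd C u (sadd C v w).
Proof.
move=> /stalkC [a [[sa _] ay ->]] /stalkC [b [[sb _] bb ->]] /stalkC [c [[sc _] cy ->]] /=.
have sab := is_fam_add laws sa sb; have sbc := is_fam_add laws sb sc.
rewrite !(germC_add laws) //; try by split.
apply: (@gC_ptw _ _ _ (a.1 `&` b.1 `&` c.1)); try exact: is_fam_add.
- by apply: openI; [apply: openI|]; apply: fam_open.
- by split; [split|].
- by move=> z [[az bz] cz]; split; split=> //; split.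
- move=> A z oA [[az bz] cz] Az /=.
  by apply: (sl_addA laws); apply: fam_stalk.
Qed.

Lemma coker_addC v w y : in_stalk v y -> in_stalk w y -> sadd C v w = sadd C w v.
Proof.
move=> /stalkC [a [[sa _] ay ->]] /stalkC [b [[sb _] bb ->]] /=.
rewrite !(germC_add laws) //.
apply: (@gC_ptw _ _ _ (a.1 `&` b.1)); try exact: is_fam_add.
- by apply: openI; apply: fam_open.
- by split.
- by move=> z [az bz]; split; split.
- by move=> A z oA [az bz] Az /=; apply: (sl_addC laws); apply: fam_stalk.
Qed.

Lemma coker_add0l v y : in_stalk v y -> sadd C (szero C y) v = v.
Proof.
move=> /stalkC [a [[sa _] ay ->]] /=.
rewrite /gzero (germC_add laws (is_fam0 laws) sa) //.
apply: (@gC_ptw _ _ _ a.1) => //; first by apply: is_fam_add => //; apply: is_fam0.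
  exact: fam_open.
by move=> A z oA az Az /=; apply: (sl_add0l laws); apply: fam_stalk.
Qed.

Lemma coker_addN v y : in_stalk v y -> sadd C v (sopp C v) = szero C y.
Proof.
move=> /stalkC [a [[sa _] ay ->]] /=.
rewrite (germC_opp laws) // (germC_add laws) //; last exact: (is_fam_opp laws).
apply: (@gC_ptw _ _ _ a.1) => //; first by apply: is_fam_add => //; apply: is_fam_opp.
- exact: (is_fam0 laws).
- exact: fam_open.
- by move=> A z oA az Az /=; apply: (sl_addN laws); apply: fam_stalk.
Qed.

Lemma coker_Gamma0 W : Gamma C W (szero C).
Proof. by apply: (@Gamma_sub _ [set: X]) => //; apply: (Gamma_C_germs laws (in_prod0 laws)). Qed.

Lemma coker_GammaD W s1 s2 : Gamma C W s1 -> Gamma C W s2 ->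
  Gamma C W (fun z => sadd C (s1 z) (s2 z)).
Proof.
move=> g1 g2; apply: Gamma_loc => y Wy.
have [r1 [V1 [EP1 oV1 V1y H1]]] := Gamma_C_rep laws g1 Wy.
have [r2 [V2 [EP2 oV2 V2y H2]]] := Gamma_C_rep laws g2 Wy.
exists (V1 `&` V2); split=> //; first exact: openI.
apply: (@Gamma_ext C _ (fun z => gC z (fam_bin add r1 r2))).
  move=> z [Wz [V1z V2z]]; have [r1z ->] := H1 z Wz V1z; have [r2z ->] := H2 z Wz V2z.
  by rewrite /= (germC_add laws) //; [exact: EP1.1 | exact: EP2.1].
apply: (Gamma_C_germs laws); first exact: (in_prod_add laws).
by move=> z [Wz [V1z V2z]]; split; [apply: (H1 z Wz V1z).1 | apply: (H2 z Wz V2z).1].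
Qed.

Lemma coker_GammaN W s : Gamma C W s -> Gamma C W (fun z => sopp C (s z)).
Proof.
move=> g1; apply: Gamma_loc => y Wy.
have [r1 [V1 [EP1 oV1 V1y H1]]] := Gamma_C_rep laws g1 Wy.
exists V1; split=> //.
apply: (@Gamma_ext C _ (fun z => gC z (fam_map (sopp F) r1))).
  move=> z [Wz V1z]; have [r1z ->] := H1 z Wz V1z.
  by rewrite /= (germC_opp laws) //; exact: EP1.1.
apply: (Gamma_C_germs laws); first exact: (in_prod_opp laws).
by move=> z [Wz V1z]; apply: (H1 z Wz V1z).1.
Qed.

(* The zero section of coker(delta_F) is open, so zero loci are open. *)
Lemma coker_zero_open W s u : Gamma C W s -> W u -> s u = szero C u ->
  exists V, [/\ open V, V u & forall z, W z -> V z -> s z = szero C z].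
Proof.
move=> gs Wu su; have [_ H2] := gs.
have [V [oV [Vu HV]]] :=
  H2 u Wu _ (open_coker_germs laws (in_prod0 laws)) (ex_intro _ u (conj I su)).
exists V; split=> // z Wz Vz.
have [u' [_ szu]] := HV z Wz Vz.
have [_ fz] := Gamma_stalk gs Wz; rewrite /= szu in fz.
by have uz : u' = z := fz; subst u'.
Qed.

Lemma coker_actD g v w y : in_stalk v y -> in_stalk w y ->
  sact C g (sadd C v w) = sadd C (sact C g v) (sact C g w).
Proof.
move=> /stalkC [a [[sa _] ay ->]] /stalkC [b [[sb _] bb ->]] /=.
rewrite (germC_add laws) // !(germC_act laws) //; last exact: (is_fam_add laws).
rewrite (germC_add laws) //; try (by apply: (is_fam_act laws)); try (by exists y).
apply: (gC_of_eqI laws).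
- by apply: (is_fam_act laws); apply: (is_fam_add laws).
- by apply: (is_fam_add laws); apply: (is_fam_act laws).
by apply: eqI_act_bin => //; apply: (sl_actD laws).
Qed.

Lemma coker_act0 g y : sact C g (szero C y) = szero C (act g y).
Proof.
rewrite /= /gzero (germC_act laws) //; last exact: (is_fam0 laws).
apply: (@gC_ptw _ _ _ setT) => //; first exact: (is_fam_act laws g (is_fam0 laws)).
- exact: (is_fam0 laws).
- exact: openT.
- by move=> z _; split=> //; exists (act (inv g) z) => //; rewrite actKV.
- by move=> A z _ _ _ /=; rewrite (sl_act0 laws) actKV.
Qed.

Lemma coker_actN g v y : in_stalk v y -> sact C g (sopp C v) = sopp C (sact C g v).
Proof.
move=> /stalkC [a [[sa _] ay ->]] /=.
rewrite (germC_opp laws) // !(germC_act laws) //; last exact: (is_fam_opp laws).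
rewrite (germC_opp laws) //; [| exact: (is_fam_act laws) | by exists y].
apply: (@gC_ptw _ _ _ (act g @` a.1)).
- by apply: (is_fam_act laws); apply: (is_fam_opp laws).
- by apply: (is_fam_opp laws); apply: (is_fam_act laws).
- by apply: open_img; apply: fam_open.
- by exists y.
- by [].
- move=> A z oA [u au <-] Az /=; rewrite actK.
  by apply: (sl_actN laws); apply: fam_stalk => //; apply: orbit_actV Az.
Qed.

Lemma coker_Gamma_act g W s : Gamma C W s ->
  Gamma C (act g @` W) (fun z => sact C g (s (act (inv g) z))).
Proof.
move=> gs; apply: Gamma_loc => z0 [w0 Ww0 <-].
have [r [V [EPr oV Vw0 H]]] := Gamma_C_rep laws gs Ww0.
exists (act g @` V); split; [exact: open_img | by exists w0 |].
have eq_pre u w : act g u = act g w -> u = w.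
  by move=> e; rewrite -(actK g u) e actK.
apply: (@Gamma_ext C _ (fun z => gC z (fam_act g r))).
  move=> z [[w Ww <-] [w' Vw' /eq_pre ww]]; subst w'.
  rewrite actK; have [rw ->] := H w Ww Vw'.
  by rewrite /= (germC_act laws) //; exact: EPr.1.
apply: (Gamma_C_germs laws); first exact: (in_prod_act laws).
move=> z [[w Ww <-] [w' Vw' /eq_pre ww]]; subst w'.
by exists w => //; exact: (H w Ww Vw').1.
Qed.

Lemma Coker_laws : SheafLaws C.
Proof.
split.
- exact: coker_stalk0.
- exact: coker_stalkD.
- exact: coker_stalkN.
- exact: coker_stalk_act.
- exact: coker_addA.
- exact: coker_addC.
- exact: coker_add0l.
- exact: coker_addN.
- exact: coker_Gamma0.
- exact: coker_GammaD.
- exact: coker_GammaN.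
- exact: coker_zero_open.
- exact: coker_actD.
- exact: coker_act0.
- exact: coker_actN.
- exact: coker_Gamma_act.
Qed.

End CokerLaws.

(* const Q satisfies the sheaf laws: its sections are the locally constant
   functions to Q, with pointwise operations and trivial action on Q. *)
Section ConstantSheaf.
Local Notation Q := (constQ act).

Lemma constQ_locally_constant W s : Gamma Q W s -> forall y, W y ->
  exists V, [/\ open V, V y & forall z, W z -> V z -> s z = (z, (s y).2)].
Proof.
move=> gs y Wy; have [_ H2] := gs.
have oO : sopen Q [set e : X * rat | e.2 = (s y).2].
  by move=> e /= e2; exists setT; split; [exact: openT | split].
have [V [oV [Vy HV]]] := H2 y Wy _ oO (erefl _).
exists V; split=> // z Wz Vz; have /= e2 := HV z Wz Vz.
have [_ /= e1] := Gamma_stalk gs Wz.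
by move: e1 e2; case: (s z) => a b /= -> ->.
Qed.

Lemma constQ_Gamma W s : (forall y, W y -> (s y).1 = y) ->
  (forall y, W y -> exists V, [/\ open V, V y &
     forall z, W z -> V z -> (s z).2 = (s y).2]) ->
  Gamma Q W s.
Proof.
move=> H1 H2; split=> [y Wy|y Wy Op oO Oy]; first by split=> //; apply: H1.
have [V0 [oV0 [V0y HV0]]] := oO _ Oy.
have [V [oV Vy HV]] := H2 y Wy.
rewrite H1 // in V0y HV0.
exists (V `&` V0); split; first exact: openI.
split=> [|z Wz [Vz V0z]]; first by split.
have -> : s z = (z, (s y).2).
  by move: (H1 z Wz) (HV z Wz Vz); case: (s z) => a b /= -> ->.
by apply: HV0.
Qed.

Lemma constQ_laws : SheafLaws Q.
Proof.
split.
- by [].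
- by move=> v w y [_ ?] [_ ?].
- by move=> v y [_ ?].
- by move=> g v y [_ /= ->].
- by move=> u v w y _ _ _ /=; rewrite GRing.addrA.
- by move=> v w y [_ /= e1] [_ /= e2]; rewrite e1 e2 GRing.addrC.
- by move=> [v1 v2] y [_ /= ->]; rewrite GRing.add0r.
- by move=> [v1 v2] y [_ /= ->]; rewrite GRing.subrr.
- move=> W; apply: constQ_Gamma => // y Wy.
  by exists setT; split; [exact: openT | |].
- move=> W s1 s2 g1 g2; apply: constQ_Gamma => [y Wy|y Wy] /=.
    exact: (Gamma_stalk g1 Wy).2.
  have [V1 [oV1 V1y H1]] := constQ_locally_constant g1 Wy.
  have [V2 [oV2 V2y H2]] := constQ_locally_constant g2 Wy.
  exists (V1 `&` V2); split; [exact: openI | by split |].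
  by move=> z Wz [V1z V2z]; rewrite H1 // H2.
- move=> W s1 g1; apply: constQ_Gamma => [y Wy|y Wy] /=.
    exact: (Gamma_stalk g1 Wy).2.
  have [V1 [oV1 V1y H1]] := constQ_locally_constant g1 Wy.
  by exists V1; split=> // z Wz V1z; rewrite H1.
- move=> W s u gs Wu su.
  have [V [oV Vu H]] := constQ_locally_constant gs Wu.
  by exists V; split=> // z Wz Vz; rewrite H // su.
- by [].
- by [].
- by [].
- move=> g W s gs; apply: constQ_Gamma => [y [w Ww <-]|y [w Ww <-]] /=.
    by rewrite actK; have := (Gamma_stalk gs Ww).2; rewrite /= => ->.
  have [V [oV Vw H]] := constQ_locally_constant gs Ww.
  exists (act g @` V); split; [exact: open_img | by exists w |].
  move=> z [w' Ww' <-] [w'' Vw'' e].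
  have ww : w'' = w' by rewrite -(actK g w'') e actK.
  by subst w''; rewrite !actK H.
Qed.

End ConstantSheaf.

Lemma Cs_laws k : SheafLaws (Cs inv act k).
Proof. by elim: k => [|k IH]; [exact: constQ_laws | exact: (Coker_laws IH)]. Qed.

Lemma cbX_sub k : @cbX X k.+1 `<=` @cbX X k.
Proof. by move=> z []. Qed.

Lemma cbX_mono i k : (i <= k)%N -> @cbX X k `<=` @cbX X i.
Proof.
elim: k => [|k IH]; first by rewrite leqn0 => /eqP ->.
rewrite leq_eqVlt => /orP [/eqP -> //|]; rewrite ltnS => /IH H z /cbX_sub.
exact: H.
Qed.

Lemma cbX_act k g z : @cbX X k z -> @cbX X k (act g z).
Proof.
elim: k g z => [//|k IH] g z [cz niso]; split; first exact: IH.
move=> [_ [U [oU HU]]]; apply: niso; split=> //.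
exists (act (inv g) @` U); split; first exact: open_img.
apply/seteqP; split=> w.
  case=> -[u Uu <-] cw.
  have cu : @cbX X k u by rewrite -(actKV g u); apply: IH.
  have : (U `&` @cbX X k) u by [].
  by rewrite HU => ->; rewrite actK.
move=> ->; split; last exact: cz.
by exists (act g z); [have [] : (U `&` @cbX X k) (act g z) by rewrite HU | rewrite actK].
Qed.

Lemma height_actE k g z : height (act g z) k <-> height z k.
Proof.
have cbX_actE j : @cbX X j (act g z) <-> @cbX X j z.
  by split=> [H|]; [rewrite -(actK g z); apply: cbX_act | apply: cbX_act].
by rewrite /height !cbX_actE.
Qed.

Lemma dense_height k x (W : set X) : @cbX X k.+1 x -> open W -> W x ->
  exists v, W v /\ height v k.
Proof.
move=> [cx _] oW Wx.
have [v [[Wv cv] [V [oV HV]]]] := scat (ex_intro _ x (conj Wx cx) : (W `&` @cbX X k) !=set0).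
exists v; split=> //; split=> // -[_]; apply; split=> //.
exists (V `&` W); split; first exact: openI.
apply/seteqP; split=> w.
  by case=> -[Vw Ww] cw; have : (V `&` (W `&` @cbX X k)) w by []; rewrite HV.
move=> ->; have : (V `&` (W `&` @cbX X k)) v by rewrite HV.
by case=> Vv [Wv' cv']; split.
Qed.

Lemma not_height_S k x : @cbX X k.+1 x -> ~ height x k.
Proof. by move=> c [_]; apply. Qed.

Definition cut k (c : X -> car (Cs inv act k)) (z : X) : car (Cs inv act k) :=
  if pselect (height z k) then c z else szero (Cs inv act k) z.

Fixpoint canon (k : nat) : X -> car (Cs inv act k) :=
  match k as k0 return X -> car (Cs inv act k0) with
  | 0 => fun w => (w, GRing.one rat)
  | k'.+1 => fun w => qmap act (germ act (@eqI G X act (Cs inv act k')) w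
               ([set: X], fun _ => cut (canon k')))
  end.

Definition phi k := cut (canon k).
Definition cut_fam k : set X * S (Cs inv act k) := ([set: X], fun _ => phi k).

Local Notation gI k := (germ act (@eqI G X act (Cs inv act k))).
Local Notation gC k := (germ act (@eqC G X act (Cs inv act k))).

Definition canon_spec k := (forall w, in_stalk (canon k w) w) /\
  (forall g z, sact (Cs inv act k) g (canon k (act (inv g) z)) = canon k z).

Lemma phi_invariant k g z : canon_spec k ->
  sact (Cs inv act k) g (phi k (act (inv g) z)) = phi k z.
Proof.
move=> [_ H]; rewrite /phi /cut.
case: pselect => h1; case: pselect => h2.
- exact: H.
- by exfalso; apply: h2; move: h1; rewrite height_actE.
- by exfalso; apply: h1; rewrite height_actE.
- by rewrite (sl_act0 (Cs_laws k)) actKV.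
Qed.

Lemma phi_stalk k z : canon_spec k -> in_stalk (phi k z) z.
Proof.
move=> [H _]; rewrite /phi /cut; case: pselect => h; first exact: H.
exact: (sl_zero (Cs_laws k)).
Qed.

Lemma is_fam_cut k : canon_spec k -> is_fam (cut_fam k).
Proof.
move=> P; apply/is_famP; split=> [|A oA z _ _]; [exact: openT | exact: phi_stalk].
Qed.

Lemma in_prod_cut k : canon_spec k -> in_prod (cut_fam k).
Proof.
move=> P; apply: (in_prod_invariant (Cs_laws k)); first exact: is_fam_cut.
by move=> g A z _ _; apply: phi_invariant.
Qed.

Lemma eqI_cut_act k g y : canon_spec k -> eqI act y (fam_act g (cut_fam k)) (cut_fam k).
Proof.
move=> P; apply: (@eqI_ptw _ _ _ _ setT) => //; first exact: openT.
  by move=> u _; split=> //; exists (act (inv g) u) => //; rewrite actKV.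
by move=> A u oA _ Au /=; apply: phi_invariant.
Qed.

Lemma canon_specP k : canon_spec k.
Proof.
elim: k => [|k IH]; first by split=> [//|g z]; rewrite /= actKV.
have laws := Cs_laws k; have sR := is_fam_cut IH.
split=> [w|g z].
  rewrite /= (qmap_germ laws sR) //.
  by apply/(stalk_coker laws); exists (cut_fam k); split=> //; apply: in_prod_cut.
rewrite /= !(qmap_germ laws sR) // (germC_act laws) // actKV.
apply: (gC_of_eqI laws) => //; first exact: (is_fam_act laws).
exact: eqI_cut_act.
Qed.

Lemma gI_rel_pointwise k y (r r' : set X * S (Cs inv act k)) :
  is_fam r -> r.1 y -> gI k y r = gI k y r' ->
  exists W, [/\ open W, W y, W `<=` r.1 & forall z, W z ->
    r.2 (range (fun g => act g z)) z = r'.2 (range (fun g => act g z)) z].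
Proof.
move=> sr ry /(gI_rel sr ry) [W [oW Wy sub H]].
exists W; split=> //; first by move=> z /sub [].
by move=> z Wz; have [oz zz] := orbit_of z; apply: H.
Qed.

(* The density argument: if c_k does not vanish on X^(k), then near a point
   u of X^(k+1) the cut phi_k coincides with no continuous section of C^k.
   Such a section would vanish at u, hence near u (zero loci are open),
   while points of height k, where phi_k = c_k <> 0, accumulate at u. *)
Lemma cut_not_local_section k :
  (forall v, @cbX X k v -> canon k v <> szero (Cs inv act k) v) ->
  forall u, @cbX X k.+1 u -> forall (W : set X) (sg : X -> car (Cs inv act k)),
  open W -> W u -> Gamma (Cs inv act k) W sg -> ~ (forall z, W z -> phi k z = sg z).
Proof.
move=> nz u cu W sg oW Wu gs H.
have su : sg u = szero _ u.
  by rewrite -H // /phi /cut; case: pselect => // h; case: (not_height_S cu h).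
have [V [oV Vu HV]] := sl_zero_open (Cs_laws k) gs Wu su.
have [v [[Wv Vv] hv]] := dense_height cu (openI oW oV) (conj Wu Vu).
apply: (nz v hv.1).
have <- : phi k v = canon k v by rewrite /phi /cut; case: pselect.
by rewrite H // HV.
Qed.

Lemma canon_nonzero k v : @cbX X k v -> canon k v <> szero (Cs inv act k) v.
Proof.
elim: k v => [v _ /= [] /eqP|k IH v cv]; first by rewrite GRing.oner_eq0.
have laws := Cs_laws k; have sR := is_fam_cut (canon_specP k).
rewrite /= (qmap_germ laws sR) // => /(gC_rel_pointwise laws sR I) [W [t [oW Wv gt Ht]]].
apply: (cut_not_local_section IH cv oW Wv gt) => z Wz.
by have /= -> := Ht z Wz; rewrite (sl_add0l laws (Gamma_stalk gt Wz)).
Qed.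

(* The theorem for i = 0: a section t of const Q near x with delta_0 t = R_0
   would be a continuous section of C^0 agreeing with phi_0 near x. *)
Lemma not_image_delta0 x (U : set X) : @cbX X 1 x -> open U -> U x ->
  ~ (exists t : X -> car (Iprev inv act 0), Gamma (Iprev inv act 0) U t /\
      forall y, U y -> delta inv act 0 U t y = gI 0 y (cut_fam 0)).
Proof.
move=> cx oU Ux [t [gt ht]].
have st : @is_fam (Cs inv act 0) (U, fun _ => t).
  by apply/is_famP; split=> // A oA z Uz Az; exact: Gamma_stalk gt Uz.
have [W [oW Wx WU Ht]] := gI_rel_pointwise st Ux (ht x Ux).
apply: (cut_not_local_section (@canon_nonzero 0) cx oW Wx (Gamma_sub WU gt)).
by move=> z Wz; have /= -> := Ht z Wz.
Qed.

(* The theorem for i = k+1: if q(t) = phi_(k+1) near x, with t a section of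
   I^k represented near x by a family r, then r is zero modulo delta near x
   (phi_(k+1) vanishes at x) and equals phi_k modulo delta near every nearby
   point u of height k+1; thus phi_k is a continuous section near u. *)
Lemma not_image_deltaS k x (U : set X) : @cbX X k.+2 x -> open U -> U x ->
  ~ (exists t : X -> car (Iprev inv act k.+1), Gamma (Iprev inv act k.+1) U t /\
      forall y, U y -> delta inv act k.+1 U t y = gI k.+1 y (cut_fam k.+1)).
Proof.
move=> cx oU Ux [t [gt ht]].
have laws := Cs_laws k; have sR := is_fam_cut (canon_specP k).
have sq : @is_fam (Cs inv act k.+1) (U, fun _ z => qmap act (t z)).
  apply/is_famP; split=> // A oA z Uz Az; have [pz fz] := Gamma_stalk gt Uz.
  by split; [exists (t z) | ].
have [W0 [oW0 W0x _ qt]] := gI_rel_pointwise sq Ux (ht x Ux).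
have [r [V [[sr _] oV Vx Hr]]] := Gamma_I_rep gt Ux.
have qr z : U z -> V z -> W0 z -> gC k z r = phi k.+1 z.
  move=> Uz Vz W0z; have [rz tz] := Hr z Uz Vz.
  by rewrite -(qmap_germ laws sr rz) -tz; have /= -> := qt z W0z.
have r_zero : gC k x r = gC k x (fam0 _).
  rewrite qr // /phi /cut; case: pselect => // h; case: (not_height_S cx h).
have [W1 [t1 [oW1 W1x gt1 H1]]] := gC_rel_pointwise laws sr (Hr x Ux Vx).1 r_zero.
have oW : open (U `&` V `&` W0 `&` W1) by do !apply: openI.
have [u [[[[Uu Vu] W0u] W1u] hu]] :=
  dense_height cx oW (conj (conj (conj Ux Vx) W0x) W1x).
have r_cut : gC k u (cut_fam k) = gC k u r.
  rewrite qr // /phi /cut; case: pselect => h; last by case: h.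
  by rewrite /= (qmap_germ laws sR).
have [W2 [t2 [oW2 W2u gt2 H2]]] := gC_rel_pointwise laws sR I r_cut.
have gt12 : Gamma (Cs inv act k) (W1 `&` W2) (fun z => sadd _ (t1 z) (t2 z)).
  by apply: (sl_GammaD laws); apply: Gamma_sub gt1 || apply: Gamma_sub gt2;
    move=> ? [].
apply: (cut_not_local_section (@canon_nonzero k) hu.1 (openI oW1 oW2)
  (conj W1u W2u) gt12) => z [W1z W2z].
have /= -> := H2 z W2z.
by rewrite H1 // (sl_add0l laws (Gamma_stalk gt1 W1z)).
Qed.

Lemma canon_class_survives i x (U : set X) : @cbX X i.+1 x -> open U -> U x ->
  exists s : X -> car (Is inv act i),
    [/\ Gamma (Is inv act i) U s,
        (forall g, act g x = x -> forall y, U y ->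
           sact (Is inv act i) g (s y) = s (act g y)) &
        ~ (exists t : X -> car (Iprev inv act i),
             Gamma (Iprev inv act i) U t /\
             forall y, U y -> delta inv act i U t y = s y)].
Proof.
move=> cx oU Ux; have laws := Cs_laws i; have P := canon_specP i.
exists (fun y => gI i y (cut_fam i)); split.
- by apply: (Gamma_I_germs (in_prod_cut P)).
- move=> g _ y _ /=; rewrite (germI_act laws) //; last exact: is_fam_cut.
  have sR := is_fam_cut P.
  by apply: gI_eq => //; [exact: (is_fam_act laws) | exact: eqI_cut_act].
- case: i cx {laws P} => [|k] cx.
    exact: (not_image_delta0 cx oU Ux).
  exact: (not_image_deltaS cx oU Ux).
Qed.

End Resolution.

Theorem proposition5p13 (G X : topologicalType)
  (mul : G -> G -> G) (inv : G -> G) (one : G) (act : G -> X -> X) (n : nat)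
  (B : X -> set (set X)) :
  is_profinite_group mul inv one ->
  is_profinite_Gspace mul one act ->
  scattered X -> cb_rank X n ->
  (forall x U, B x U -> [/\ open U, U x &
      forall g, act g x = x -> forall y, U y -> U (act g y)]) ->
  (forall x N, nbhs x N -> exists2 U, B x U & U `<=` N) ->
  forall x U, B x U -> forall i : nat, (exists k, height x k /\ (i < k)%N) ->
  exists s : X -> car (Is inv act i),
    [/\ Gamma (Is inv act i) U s,
        (forall g, act g x = x -> forall y, U y ->
           sact (Is inv act i) g (s y) = s (act g y)) &
        ~ (exists t : X -> car (Iprev inv act i),
             Gamma (Iprev inv act i) U t /\
             forall y, U y -> delta inv act i U t y = s y)].
Proof.
move=> [[_ _ group_inv] _ _ _] [act1 actM act_cont _] scat _ HB _ x U BxU i.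
move=> [k [[xk _] ik]]; have [oU Ux _] := HB x U BxU.
have mulVg g := (group_inv g).1; have mulgV g := (group_inv g).2.
apply: (canon_class_survives act1 actM mulVg mulgV act_cont scat _ oU Ux).
exact: cbX_mono ik _ xk.
Qed.
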